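(* Let $\mathcal{A}:\mathbb{R}^{n_1\times n_2}\to\mathbb{R}^m$ be linear, $y\in\mathbb{R}^m$, $R\ge1$, $\alpha,\beta>0$, and let $(u^1_{\alpha,\beta},\dots,u^R_{\alpha,\beta},v^1_{\alpha,\beta},\dots,v^R_{\alpha,\beta})$ be a global minimizer of $J^R_{\alpha,\beta}$. Let $\gamma>0$ and $r\in\{1,\dots,R\}$. If $v^r_{\alpha,\beta}\neq0$ and $\|v^r_{\alpha,\beta}\|_2\ge\|y\|_2^2/\gamma$, then $$\frac{\|v^r_{\alpha,\beta}\|_1}{\|v^r_{\alpha,\beta}\|_2}<\frac{\gamma}{\beta}.$$
   Context: For $y\in\mathbb{R}^m$ and $\alpha,\beta>0$, the functional $J^R_{\alpha,\beta}:(\mathbb{R}^{n_1})^R\times(\mathbb{R}^{n_2})^R\to\mathbb{R}$ is $$J^R_{\alpha,\beta}(u^1,\dots,u^R,v^1,\dots,v^R)=\Big\|y-\mathcal{A}\Big(\sum_{r=1}^Ru^r(v^r)^T\Big)\Big\|_2^2+\alpha\sum_{r=1}^R\|u^r\|_2^2+\beta\sum_{r=1}^R\|v^r\|_1.$$ *)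

(* the real field is an arbitrary real closed field R
   (the paper's R is an instance); norms are defined explicitly. *)
From HB Require Import structures.
From mathcomp Require Import all_boot all_order all_algebra.
Set Implicit Arguments. Unset Strict Implicit. Unset Printing Implicit Defensive.
Import Order.TTheory GRing.Theory Num.Theory.
Local Open Scope ring_scope.

Definition norm2 (R : rcfType) (n : nat) (x : 'cV[R]_n) : R :=
  Num.sqrt (\sum_(i < n) (x i 0) ^+ 2).

Definition norm1 (R : rcfType) (n : nat) (x : 'cV[R]_n) : R :=
  \sum_(i < n) `|x i 0|.

Definition J (R : rcfType) (n1 n2 m Rk : nat)
  (A : {linear 'M[R]_(n1, n2) -> 'cV[R]_m}) (y : 'cV[R]_m) (alpha beta : R)
  (U : 'I_Rk -> 'cV[R]_n1) (V : 'I_Rk -> 'cV[R]_n2) : R :=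
  norm2 (y - A (\sum_(r < Rk) U r *m (V r)^T)) ^+ 2
  + alpha * \sum_(r < Rk) norm2 (U r) ^+ 2
  + beta * \sum_(r < Rk) norm1 (V r).

(* Comparing a minimizer with the zero point gives J <= |y|^2.  If the
   factor u^r vanished, replacing v^r by 0 would leave the data term and
   the u-penalty unchanged and lower the l1-penalty by beta |v^r|_1 > 0,
   contradicting minimality; so u^r <> 0 and the strictly positive term
   alpha |u^r|^2 gives beta |v^r|_1 < J <= |y|^2 <= gamma |v^r|_2. *)
From Pilot Require Import Defs.
From HB Require Import structures.
From mathcomp Require Import all_boot all_order all_algebra.
From mathcomp Require Import lra.
Set Implicit Arguments. Unset Strict Implicit.
Import Order.TTheory GRing.Theory Num.Theory.
Local Open Scope ring_scope.

Section Norms.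

Variables (R : rcfType) (n : nat).
Implicit Type x : 'cV[R]_n.

Lemma norm2_ge0 x : 0 <= norm2 x.
Proof. exact: sqrtr_ge0. Qed.

Lemma norm1_ge0 x : 0 <= norm1 x.
Proof. by apply: sumr_ge0 => i _. Qed.

Lemma norm2_0 : norm2 (0 : 'cV[R]_n) = 0.
Proof. by rewrite /norm2 big1 ?sqrtr0 // => i _; rewrite mxE expr0n. Qed.

Lemma norm1_0 : norm1 (0 : 'cV[R]_n) = 0.
Proof. by rewrite /norm1 big1 // => i _; rewrite mxE normr0. Qed.

Lemma cV_neq0_entry x : x != 0 -> exists i, x i 0 != 0.
Proof.
move=> x_neq0; apply/existsP; apply: contraR x_neq0 => /existsPn x_eq0.
by apply/eqP/matrixP => i j; rewrite ord1 mxE; apply/eqP/negPn/x_eq0.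
Qed.

Lemma norm2_gt0 x : x != 0 -> 0 < norm2 x.
Proof.
move=> /cV_neq0_entry [i xi_neq0]; rewrite /norm2 sqrtr_gt0 (bigD1 i) //=.
rewrite ltr_wpDr ?exprn_even_gt0 //.
by apply: sumr_ge0 => j _; rewrite sqr_ge0.
Qed.

Lemma norm1_gt0 x : x != 0 -> 0 < norm1 x.
Proof.
move=> /cV_neq0_entry [i xi_neq0]; rewrite /norm1 (bigD1 i) //=.
by rewrite ltr_wpDr ?normr_gt0 //; apply: sumr_ge0.
Qed.

End Norms.

Section Functional.

Variables (R : rcfType) (n1 n2 m Rk : nat).
Variables (A : {linear 'M[R]_(n1, n2) -> 'cV[R]_m}) (y : 'cV[R]_m).
Variables (alpha beta : R).

Local Notation J := (@J R n1 n2 m Rk A y alpha beta).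

Lemma J_at_zero :
  J (fun _ => 0 : 'cV[R]_n1) (fun _ => 0 : 'cV[R]_n2) = norm2 y ^+ 2.
Proof.
rewrite /Defs.J big1 => [|i _]; last by rewrite mul0mx.
rewrite linear0 subr0 [X in beta * X]big1 => [|i _]; last exact: norm1_0.
by rewrite big1 ?mulr0 ?addr0 // => i _; rewrite norm2_0 expr0n.
Qed.

Lemma J_ge_penalty (U : 'I_Rk -> 'cV[R]_n1) (V : 'I_Rk -> 'cV[R]_n2) r :
  0 <= alpha -> 0 <= beta ->
  alpha * norm2 (U r) ^+ 2 + beta * norm1 (V r) <= J U V.
Proof.
move=> alpha_ge0 beta_ge0; rewrite /Defs.J -addrA.
apply: ler_wpDl; first exact: sqr_ge0.
apply: lerD; apply: ler_wpM2l => //; rewrite (bigD1 r) //= lerDl.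
  by apply: sumr_ge0 => i _; rewrite sqr_ge0.
by apply: sumr_ge0 => i _; apply: norm1_ge0.
Qed.

(* With u^r = 0 the r-th summand of the rank-one sum vanishes whatever v^r is. *)
Lemma J_zero_factor (U : 'I_Rk -> 'cV[R]_n1) (V : 'I_Rk -> 'cV[R]_n2) r :
  U r = 0 ->
  J U V = J U (fun i => if i == r then 0 else V i) + beta * norm1 (V r).
Proof.
move=> Ur0; set V' := fun i => if i == r then 0 else V i.
have same_sum : \sum_(i < Rk) U i *m (V' i)^T = \sum_(i < Rk) U i *m (V i)^T.
  by apply: eq_bigr => i _; rewrite /V'; case: eqP => // ->; rewrite Ur0 !mul0mx.
rewrite /Defs.J same_sum -!addrA; congr (_ + (_ + _)).
rewrite [in LHS](bigD1 r) //= [in RHS](bigD1 r) //= /V' eqxx norm1_0 add0r.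
rewrite mulrDr addrC; congr (_ + _); congr (_ * _).
by apply: eq_bigr => i /negbTE ->.
Qed.

Lemma minimizer_factor_neq0 (U : 'I_Rk -> 'cV[R]_n1) (V : 'I_Rk -> 'cV[R]_n2) r :
  0 < beta -> (forall U' V', J U V <= J U' V') -> V r != 0 -> U r != 0.
Proof.
move=> beta_gt0 J_min Vr_neq0; apply/eqP => Ur0.
have := J_min U (fun i => if i == r then 0 else V i).
by rewrite (J_zero_factor V Ur0) gerDl lt_geF // mulr_gt0 // norm1_gt0.
Qed.

End Functional.

Theorem mainTheorem4 (R : rcfType) (n1 n2 m Rk : nat)
  (A : {linear 'M[R]_(n1, n2) -> 'cV[R]_m}) (y : 'cV[R]_m)
  (alpha beta : R) (U : 'I_Rk -> 'cV[R]_n1) (V : 'I_Rk -> 'cV[R]_n2)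
  (gamma : R) (r : 'I_Rk) :
  (1 <= Rk)%N -> 0 < alpha -> 0 < beta ->
  (forall (U' : 'I_Rk -> 'cV[R]_n1) (V' : 'I_Rk -> 'cV[R]_n2),
      J A y alpha beta U V <= J A y alpha beta U' V') ->
  0 < gamma ->
  V r != 0 ->
  norm2 y ^+ 2 / gamma <= norm2 (V r) ->
  norm1 (V r) / norm2 (V r) < gamma / beta.
Proof.
(* [1 <= Rk] is already implied by the existence of [r : 'I_Rk]. *)
move=> _ alpha_gt0 beta_gt0 J_min gamma_gt0 Vr_neq0 y_small.
have J_le_y := J_min (fun _ => 0) (fun _ => 0); rewrite J_at_zero in J_le_y.
have Ur_pen : 0 < alpha * norm2 (U r) ^+ 2.
  by rewrite mulr_gt0 // exprn_gt0 // norm2_gt0 // (minimizer_factor_neq0 beta_gt0 J_min).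
have J_ge := J_ge_penalty A y U V r (ltW alpha_gt0) (ltW beta_gt0).
rewrite ler_pdivrMr // in y_small.
rewrite ltr_pdivrMr ?norm2_gt0 // mulrAC ltr_pdivlMr // mulrC.
lra.
Qed.
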